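(* Let $\mathcal{X}\subseteq\mathbb{R}^d$ be nonempty, closed and convex, let $f:\mathbb{R}^d\to\mathbb{R}$ be convex and differentiable, and assume $\mathcal{X}_\star:=\operatorname{arg\,min}_{x\in\mathcal{X}} f(x)$ is nonempty. Assume there is $G>0$ with $\|\nabla f(x)\|\le G$ for all $x\in\mathcal{X}$. Let $x_0\in\mathcal{X}$, $x_\star\in\mathcal{X}_\star$, and let $\{x_k\}_{k\ge0}$ be generated by $x_{k+1}\in\operatorname{arg\,min}_{z\in\mathcal{X}\cap\mathcal{B}(x_k,t_k)}\langle\nabla f(x_k),z\rangle$, where $t_k:=\frac{f(x_k)-f(x_\star)}{\|\nabla f(x_k)\|}$ whenever $x_k\neq x_\star$ and $t_k=0$ when $x_k=x_\star$. Then for every $K\ge1$, $$\frac1K\sum_{k=0}^{K-1}(f(x_k)-f(x_\star))^2\le\frac{G^2\|x_0-x_\star\|^2}{K},$$ and the average iterate $\hat x_K:=\frac1K\sum_{k=0}^{K-1}x_k$ satisfies $f(\hat x_K)-f(x_\star)\le\frac{G\|x_0-x_\star\|}{\sqrt K}$.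
   Context: $\|\cdot\|$ is the Euclidean norm, $\mathcal{B}(x,t):=\{y:\|y-x\|\le t\}$. *)

From HB Require Import structures.
From mathcomp Require Import all_boot all_order all_algebra.
From mathcomp Require Import all_classical all_reals all_analysis.
Set Implicit Arguments. Unset Strict Implicit. Unset Printing Implicit Defensive.
Import Order.TTheory GRing.Theory Num.Theory.
Import numFieldNormedType.Exports.
Local Open Scope classical_set_scope.
Local Open Scope ring_scope.

Section Defs.
Variables (R : realType) (d : nat).
Implicit Types (x y : 'rV[R]_d).

(* Euclidean inner product and norm (the library's norm on 'rV is the max norm). *)
Definition dotv x y : R := \sum_(i < d) x 0 i * y 0 i.
Definition enorm x : R := Num.sqrt (dotv x x).
Definition eball x (t : R) : set 'rV[R]_d := [set y | enorm (y - x) <= t].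

Definition convex_fun (f : 'rV[R]_d -> R) : Prop :=
  forall x y (l : R), 0 <= l <= 1 ->
    f (l *: x + (1 - l) *: y) <= l * f x + (1 - l) * f y.

Definition argmin (S : set 'rV[R]_d) (g : 'rV[R]_d -> R) : set 'rV[R]_d :=
  [set x | S x /\ forall y, S y -> g x <= g y].

Definition grad (f : 'rV[R]_d -> R) x : 'rV[R]_d :=
  \row_(i < d) ('d f x (delta_mx 0 i : 'rV[R]_d)).

(* step size t_k ; when the gradient is zero, x / 0 = 0 in MathComp *)
Definition stepsize (f : 'rV[R]_d -> R) (xs x : 'rV[R]_d) : R :=
  if x == xs then 0 else (f x - f xs) / enorm (grad f x).
End Defs.

From HB Require Import structures.
From mathcomp Require Import all_boot all_order all_algebra.
From mathcomp Require Import all_classical all_reals all_analysis.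
From mathcomp Require Import ring lra.
Import Order.TTheory GRing.Theory Num.Theory.
Import numFieldNormedType.Exports.
Local Open Scope classical_set_scope.
Local Open Scope ring_scope.

(* Write [t_k] for the step size and [g_k] for the gradient at [x_k]. Convexity
   gives [<g_k, x_star - x_k> <= -t_k |g_k|], i.e. [x_star] lies beyond the
   unique minimizer [x_k - t_k g_k / |g_k|] of [<g_k, .>] on the ball
   [B(x_k, t_k)]. If [<x_(k+1) - x_k, x_star - x_k> < t_k^2], moving [x_(k+1)]
   slightly towards [x_star] stays in the convex feasible set, so [x_(k+1)]
   would be that ball minimizer, which contradicts the inequality. Expanding the
   square then yields [|x_(k+1) - x_star|^2 <= |x_k - x_star|^2 - t_k^2], while
   [t_k |g_k| = f x_k - f x_star] and [|g_k| <= G] bound the squared gaps by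
   [G^2 t_k^2]; summing telescopes. The bound on the averaged iterate follows
   by Jensen's inequality and Cauchy-Schwarz. *)

Section RealSums.
Set Implicit Arguments. Unset Strict Implicit.
Variable R : realType.

Lemma sumr_le_telescope (a b : nat -> R) n :
  (forall k, a k <= b k - b k.+1) -> (forall k, 0 <= b k) ->
  \sum_(k < n) a k <= b 0%N.
Proof.
move=> ab b_ge0.
suff tele : \sum_(k < n) a k <= b 0%N - b n.
  by rewrite (le_trans tele) // lerBlDr lerDl.
elim: n => [|n IH]; first by rewrite big_ord0 subrr.
by rewrite big_ord_recr /=; have := ab n; lra.
Qed.

Lemma sqr_sumr_le n (a : 'I_n -> R) :
  (\sum_(k < n) a k) ^+ 2 <= n%:R * \sum_(k < n) a k ^+ 2.
Proof.
case: n a => [|n] a; first by rewrite !big_ord0 expr0n mul0r.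
set S1 := \sum_(k < n.+1) a k; set S2 := \sum_(k < n.+1) a k ^+ 2.
set N : R := n.+1%:R; set m := S1 / N.
have N_gt0 : 0 < N by rewrite ltr0n.
have mN : m * N = S1 by rewrite /m mulfVK // gt_eqF.
(* the spread of the [a k] around their mean [m] is nonnegative *)
have : 0 <= \sum_(k < n.+1) (a k - m) ^+ 2 by apply: sumr_ge0 => k _; exact: sqr_ge0.
have -> : \sum_(k < n.+1) (a k - m) ^+ 2 = S2 - 2 * m * S1 + N * m ^+ 2.
  rewrite (eq_bigr (fun k => a k ^+ 2 - 2 * m * a k + m ^+ 2)); last by move=> k _; ring.
  rewrite big_split sumrB /= -mulr_sumr sumr_const card_ord -mulr_natl.
  by rewrite /S2 /S1 /N; ring.
move=> dev_ge0; nra.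
Qed.

Lemma mean_le_div_sqrt n (a : 'I_n -> R) (B : R) : (0 < n)%N -> 0 <= B ->
  \sum_(k < n) a k ^+ 2 <= B ^+ 2 ->
  n%:R^-1 * \sum_(k < n) a k <= B / Num.sqrt n%:R.
Proof.
move=> n_gt0 B_ge0 sumB.
have N_gt0 : 0 < n%:R :> R by rewrite ltr0n.
set s := Num.sqrt n%:R.
have s_gt0 : 0 < s by rewrite sqrtr_gt0.
have sumr_le : \sum_(k < n) a k <= s * B.
  rewrite (le_trans (ler_norm _)) // -sqrtr_sqr -(ger0_norm B_ge0) -sqrtr_sqr -sqrtrM ?ler0n //.
  by rewrite ler_wsqrtr // (le_trans (sqr_sumr_le a)) // ler_wpM2l ?ler0n.
have -> : B / s = n%:R^-1 * (s * B).
  by rewrite -[in RHS](sqr_sqrtr (ltW N_gt0)) -/s; field; rewrite gt_eqF.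
by rewrite ler_wpM2l // invr_ge0 ltW.
Qed.

End RealSums.

Section EuclideanGeometry.
Set Implicit Arguments. Unset Strict Implicit.
Variables (R : realType) (d : nat).
Implicit Types (x y z u v g : 'rV[R]_d).

Lemma dotvC x y : dotv x y = dotv y x.
Proof. by apply: eq_bigr => i _; rewrite mulrC. Qed.

Lemma dotv0l y : dotv 0 y = 0.
Proof. by rewrite /dotv big1 // => i _; rewrite mxE mul0r. Qed.

Lemma dotvDr x y z : dotv x (y + z) = dotv x y + dotv x z.
Proof. by rewrite /dotv -big_split; apply: eq_bigr => i _; rewrite !mxE mulrDr. Qed.

Lemma dotvZr x y (a : R) : dotv x (a *: y) = a * dotv x y.
Proof. by rewrite /dotv mulr_sumr; apply: eq_bigr => i _; rewrite !mxE mulrCA. Qed.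

Lemma dotvNr x y : dotv x (- y) = - dotv x y.
Proof. by rewrite -scaleN1r dotvZr mulN1r. Qed.

Lemma dotvBr x y z : dotv x (y - z) = dotv x y - dotv x z.
Proof. by rewrite dotvDr dotvNr. Qed.

Lemma dotvDl x y z : dotv (x + y) z = dotv x z + dotv y z.
Proof. by rewrite dotvC dotvDr !(dotvC z). Qed.

Lemma dotvZl x y (a : R) : dotv (a *: x) y = a * dotv x y.
Proof. by rewrite dotvC dotvZr dotvC. Qed.

Lemma dotvBl x y z : dotv (x - y) z = dotv x z - dotv y z.
Proof. by rewrite dotvC dotvBr !(dotvC z). Qed.

Lemma dotvvB x y : dotv (x - y) (x - y) = dotv x x - dotv x y *+ 2 + dotv y y.
Proof. by rewrite dotvBl !dotvBr (dotvC y x) mulr2n; ring. Qed.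

Lemma dotvvBC x y : dotv (x - y) (x - y) = dotv (y - x) (y - x).
Proof. by rewrite -opprB dotvNr dotvC dotvNr opprK. Qed.

Lemma dotvv_ge0 x : 0 <= dotv x x.
Proof. by apply: sumr_ge0 => i _; rewrite -expr2 sqr_ge0. Qed.

Lemma dotvv_le0 x : (dotv x x <= 0) = (x == 0).
Proof.
apply/idP/eqP => [x_le0|->]; last by rewrite dotv0l.
have /eqP : dotv x x = 0 by apply/le_anti; rewrite x_le0 dotvv_ge0.
rewrite psumr_eq0 => [/allP x0|i _]; last by rewrite -expr2 sqr_ge0.
apply/rowP => i; rewrite mxE; have := x0 i (mem_index_enum _).
by rewrite /= mulf_eq0 orbb => /eqP.
Qed.

Lemma enorm_ge0 x : 0 <= enorm x.
Proof. exact: sqrtr_ge0. Qed.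

Lemma enorm_sqr x : enorm x ^+ 2 = dotv x x.
Proof. by rewrite sqr_sqrtr // dotvv_ge0. Qed.

Lemma eball_dotv x y (t : R) : 0 <= t ->
  eball x t y <-> dotv (y - x) (y - x) <= t ^+ 2.
Proof.
by move=> t_ge0; rewrite /eball /= -(ler_sqrt (dotv _ _)) ?sqr_ge0 // sqrtr_sqr ger0_norm.
Qed.

Lemma diff_dotv_grad (f : 'rV[R]_d -> R) x v : 'd f x v = dotv (grad f x) v.
Proof.
rewrite {1}(row_sum_delta v) linear_sum /dotv; apply: eq_bigr => i _.
by rewrite linearZ /= !mxE mulrC.
Qed.

Lemma convex_grad_ineq (f : 'rV[R]_d -> R) x y : convex_fun f -> differentiable f x ->
  f x + dotv (grad f x) (y - x) <= f y.
Proof.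
move=> cf df; rewrite -diff_dotv_grad -deriveE // -lerBrDl.
set g := fun h : R => h^-1 *: ((f \o shift x) (h *: (y - x)) - f x).
have dv := @diff_derivable _ _ _ f x (y - x) df.
have g_cvg : g @ 0^'+ --> 'D_(y - x) f x.
  move=> A /dv /nbhs_ballP [_ /posnumP[e] xe_A].
  by exists e%:num => //= h xe_y /gt_eqF/negbT/xe_A; exact.
apply: (cvgr_to_le g_cvg); exists 1 => //= h; rewrite /ball /= sub0r normrN => h1 h_gt0.
have h_le1 : h <= 1 by move: h1; rewrite ger0_norm ?(ltW h_gt0) // => /ltW.
rewrite /g /= [_ *: _]/(_ * _) ler_pdivrMl //.
have := cf y x h; rewrite ltW //= h_le1 => /(_ isT).
rewrite scalerBr [X in f X](_ : _ = h *: y - h *: x + x); last first.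
  by rewrite scalerBl scale1r [x - _]addrC addrA.
lra.
Qed.

Lemma convex_fun_mean (f : 'rV[R]_d -> R) (y : nat -> 'rV[R]_d) n :
  convex_fun f -> (0 < n)%N ->
  f (n%:R^-1 *: \sum_(k < n) y k) <= n%:R^-1 * \sum_(k < n) f (y k).
Proof.
move=> cf; case: n => // n _; elim: n => [|n IH].
  by rewrite !big_ord1 invr1 scale1r mul1r.
rewrite big_ord_recr [X in _ <= _ * X]big_ord_recr /=.
move: IH; set A := \sum_(k < n.+1) y k; set B := \sum_(k < n.+1) f (y k).
rewrite [n.+2%:R]mulrSr; set N : R := n.+1%:R => IH.
have N_gt0 : 0 < N by rewrite ltr0n.
have N_neq0 : N != 0 by rewrite gt_eqF.
have N1_neq0 : N + 1 != 0 by rewrite gt_eqF // addr_gt0.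
clearbody N; set l := N / (N + 1).
have l_ge0 : 0 <= l by rewrite divr_ge0 // ltW // addr_gt0.
have l_le1 : l <= 1 by rewrite ler_pdivrMr ?mul1r ?lerDl // addr_gt0.
have -> : (N + 1)^-1 *: (A + y n.+1) = l *: (N^-1 *: A) + (1 - l) *: y n.+1.
  rewrite scalerA scalerDr; congr (_ *: _ + _ *: _); rewrite /l; field; by rewrite ?N_neq0 ?N1_neq0.
have -> : (N + 1)^-1 * (B + f (y n.+1)) = l * (N^-1 * B) + (1 - l) * f (y n.+1).
  rewrite /l; field; by rewrite N_neq0 N1_neq0.
apply: le_trans (cf _ _ _ _) _; first by rewrite l_ge0 l_le1.
by rewrite lerD2r ler_wpM2l.
Qed.

Lemma ball_step_toward u v (r : R) : dotv u u <= r -> dotv u v < r ->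
  exists2 s, 0 < s <= 1 & dotv (s *: v + (1 - s) *: u) (s *: v + (1 - s) *: u) <= r.
Proof.
move=> uu_le uv_lt; set e := r - dotv u v; set D := dotv v v.
have e_gt0 : 0 < e by rewrite subr_gt0.
have D_ge0 : 0 <= D := dotvv_ge0 v.
have eD_gt0 : 0 < e + D by rewrite ltr_wpDr.
exists (e / (e + D)).
  by rewrite divr_gt0 //= ler_pdivrMr // mul1r lerDl.
set s := e / (e + D).
have s_gt0 : 0 < s by rewrite divr_gt0.
have s_le1 : s <= 1 by rewrite ler_pdivrMr // mul1r lerDl.
(* the witness equalizes [s * D] and [(1 - s) * e], so the quadratic cost
   [s^2 D] of the move is paid for by its linear gain [s e] *)
have sD : s * (s * D) = s * (1 - s) * e.
  by rewrite -mulrA; congr (_ * _); rewrite /s; field; rewrite gt_eqF.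
clearbody s; have r_ge0 : 0 <= r := le_trans (dotvv_ge0 u) uu_le.
have uu_scaled : (1 - s) ^+ 2 * dotv u u <= (1 - s) ^+ 2 * r.
  by rewrite ler_wpM2l // sqr_ge0.
have : 0 <= s * (1 - s) * e by rewrite !mulr_ge0 ?subr_ge0 // ltW.
have : 0 <= s ^+ 2 * r by rewrite mulr_ge0 ?sqr_ge0.
have uvE : dotv u v = r - e by rewrite /e opprB addrC subrK.
rewrite !dotvDl !dotvDr !dotvZl !dotvZr (dotvC v u) uvE -/D; clearbody e D.
lra.
Qed.

Lemma ball_lin_min_unique g u (t : R) : 0 < enorm g -> 0 <= t ->
  dotv u u <= t ^+ 2 -> dotv g u <= - (t * enorm g) ->
  u = - ((t / enorm g) *: g).
Proof.
move=> g_gt0 t_ge0 uu_le gu_le; set q := t / enorm g.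
have qg : q * enorm g = t by rewrite /q mulfVK // gt_eqF.
have q_ge0 : 0 <= q by rewrite divr_ge0 // ltW.
have qqgg : q * (q * dotv g g) = t ^+ 2 by rewrite -enorm_sqr -qg; ring.
have : q * dotv g u <= q * - (t * enorm g) by rewrite ler_wpM2l.
rewrite mulrN mulrCA qg => qgu_le.
apply/eqP; rewrite -subr_eq0 opprK -dotvv_le0.
rewrite !dotvDl !dotvDr !dotvZl !dotvZr (dotvC u g).
lra.
Qed.

Lemma linmin_ball_progress (X : set 'rV[R]_d) g xk xs z (t : R) :
  convex_set X -> X xs -> 0 <= t -> (enorm g = 0 -> t = 0) ->
  dotv g (xs - xk) <= - (t * enorm g) ->
  argmin (X `&` eball xk t) (dotv g) z ->
  t ^+ 2 <= dotv (z - xk) (xs - xk).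
Proof.
move=> cX Xxs t_ge0 g0_t0 gv_le [[Xz /(eball_dotv _ _ t_ge0) zb] z_min].
move: t_ge0; rewrite le_eqVlt => /predU1P[t0|t_gt0].
  move: zb; rewrite -t0 expr0n /= dotvv_le0 subr_eq0 => /eqP->.
  by rewrite subrr dotv0l.
have g_gt0 : 0 < enorm g.
  by rewrite lt_neqAle enorm_ge0 andbT eq_sym; apply/eqP => /g0_t0 t0; rewrite t0 ltxx in t_gt0.
rewrite leNgt; apply/negP => uv_lt.
have [s /andP[s_gt0 s_le1] wb] := ball_step_toward zb uv_lt.
pose w := s *: xs + (1 - s) *: z.
have w_xk : w - xk = s *: (xs - xk) + (1 - s) *: (z - xk).
  by apply/rowP => i; rewrite !mxE; ring.
have Xw : X w.
  by have := cX xs z (Itv01 (ltW s_gt0) s_le1); rewrite !inE; apply.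
have w_ball : eball xk t w by apply/(eball_dotv _ _ (ltW t_gt0)); rewrite w_xk.
have gz_le : dotv g z <= dotv g xs.
  by have := z_min w (conj Xw w_ball); rewrite dotvDr !dotvZr; nra.
have gu_le : dotv g (z - xk) <= - (t * enorm g) by move: gv_le; rewrite !dotvBr; lra.
move: uv_lt; rewrite (ball_lin_min_unique g_gt0 (ltW t_gt0) zb gu_le).
rewrite dotvC dotvNr dotvZr (dotvC (xs - xk)).
have qg : t / enorm g * enorm g = t by rewrite mulfVK ?gt_eqF.
have : t / enorm g * dotv g (xs - xk) <= t / enorm g * - (t * enorm g).
  by rewrite ler_wpM2l // divr_ge0 // ltW.
rewrite mulrN mulrCA qg; lra.
Qed.

End EuclideanGeometry.

Section PolyakBallStep.
Set Implicit Arguments. Unset Strict Implicit.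
Variables (R : realType) (d : nat) (X : set 'rV[R]_d) (f : 'rV[R]_d -> R) (xs : 'rV[R]_d).
Hypotheses (cX : convex_set X) (cf : convex_fun f) (df : forall y, differentiable f y).
Hypothesis xs_min : argmin X f xs.

Lemma stepsize_ge0 x : X x -> 0 <= stepsize f xs x.
Proof.
move=> Xx; rewrite /stepsize; case: eqP => // _.
by rewrite divr_ge0 ?enorm_ge0 // subr_ge0 xs_min.2.
Qed.

Lemma stepsize_enorm_eq0 x : enorm (grad f x) = 0 -> stepsize f xs x = 0.
Proof. by move=> g0; rewrite /stepsize g0 invr0 mulr0 if_same. Qed.

Lemma stepsize_mul_enorm x : X x -> stepsize f xs x * enorm (grad f x) = f x - f xs.
Proof.
move=> Xx; rewrite /stepsize; case: eqP => [->|_]; first by rewrite mul0r subrr.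
have [g0|g_neq0] := eqVneq (enorm (grad f x)) 0; last by rewrite mulfVK.
(* here the step size is the junk value [_ / 0 = 0]; the identity still holds
   because a vanishing gradient makes [x] a global minimizer of [f] *)
have g_eq0 : grad f x = 0 by apply/eqP; rewrite -dotvv_le0 -enorm_sqr g0 expr0n.
rewrite g0 mulr0; apply/eqP; rewrite eq_sym subr_eq0 eq_le xs_min.2 // andbT.
by have := convex_grad_ineq xs cf (df x); rewrite g_eq0 dotv0l addr0.
Qed.

Lemma grad_dotv_le_stepsize x : X x ->
  dotv (grad f x) (xs - x) <= - (stepsize f xs x * enorm (grad f x)).
Proof.
by move=> Xx; rewrite stepsize_mul_enorm //; have := convex_grad_ineq xs cf (df x); lra.
Qed.

Lemma stepsize_dist_decrease xk z : X xk ->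
  argmin (X `&` eball xk (stepsize f xs xk)) (dotv (grad f xk)) z ->
  dotv (z - xs) (z - xs) <= dotv (xk - xs) (xk - xs) - stepsize f xs xk ^+ 2.
Proof.
move=> Xxk z_min; set t := stepsize f xs xk.
have t_ge0 : 0 <= t := stepsize_ge0 Xxk.
have progress : t ^+ 2 <= dotv (z - xk) (xs - xk).
  apply: linmin_ball_progress cX xs_min.1 t_ge0 _ (grad_dotv_le_stepsize Xxk) z_min.
  exact: stepsize_enorm_eq0.
have [_ /(eball_dotv _ _ t_ge0) zb] := z_min.1.
have -> : z - xs = (z - xk) - (xs - xk) by rewrite opprB addrA subrK.
rewrite dotvvB (dotvvBC xk); lra.
Qed.

Lemma gap_sqr_le_stepsize (G : R) x : X x -> enorm (grad f x) <= G ->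
  (f x - f xs) ^+ 2 <= G ^+ 2 * stepsize f xs x ^+ 2.
Proof.
move=> Xx gG; rewrite -stepsize_mul_enorm // mulrC exprMn ler_wpM2r ?sqr_ge0 //.
by rewrite ler_pXn2r ?nnegrE ?enorm_ge0 // (le_trans (enorm_ge0 _) gG).
Qed.

End PolyakBallStep.

Theorem theorem4 (R : realType) (d : nat) (X : set 'rV[R]_d)
  (f : 'rV[R]_d -> R) (G : R) (xs : 'rV[R]_d) (x : nat -> 'rV[R]_d) :
  X !=set0 -> closed X -> convex_set X ->
  convex_fun f -> (forall y, differentiable f y) ->
  argmin X f !=set0 ->
  0 < G -> (forall y, X y -> enorm (grad f y) <= G) ->
  X (x 0%N) -> argmin X f xs ->
  (forall k, argmin (X `&` eball (x k) (stepsize f xs (x k)))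
                    (fun z => dotv (grad f (x k)) z) (x k.+1)) ->
  forall K : nat, (1 <= K)%N ->
    (K%:R)^-1 * \sum_(k < K) (f (x k) - f xs) ^+ 2
      <= G ^+ 2 * enorm (x 0%N - xs) ^+ 2 / K%:R /\
    f ((K%:R)^-1 *: \sum_(k < K) x k) - f xs
      <= G * enorm (x 0%N - xs) / Num.sqrt (K%:R).
Proof.
(* closedness and the nonemptiness assumptions only make the iteration well
   defined; the bound does not use them *)
move=> _ _ cX cf df _ G_gt0 gradG Xx0 xs_min x_step K K_gt0.
have Xx k : X (x k) by elim: k => // k _; have [[]] := x_step k.
have sum_gap_sqr : \sum_(k < K) (f (x k) - f xs) ^+ 2 <= (G * enorm (x 0%N - xs)) ^+ 2.
  rewrite exprMn enorm_sqr.
  apply: (sumr_le_telescope (a := fun k => (f (x k) - f xs) ^+ 2)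
                            (b := fun k => G ^+ 2 * dotv (x k - xs) (x k - xs))) => k.
    apply: le_trans (gap_sqr_le_stepsize cf df xs_min (Xx k) (gradG _ (Xx k))) _.
    rewrite -mulrBr ler_wpM2l ?sqr_ge0 //.
    by have := stepsize_dist_decrease cX cf df xs_min (Xx k) (x_step k); lra.
  by rewrite mulr_ge0 ?sqr_ge0 ?dotvv_ge0.
have K_pos : 0 < K%:R :> R by rewrite ltr0n.
split; first by rewrite -exprMn mulrC ler_wpM2r // invr_ge0 ltW.
apply: le_trans (lerD (convex_fun_mean x cf K_gt0) (lexx (- f xs))) _.
have -> : K%:R^-1 * \sum_(k < K) f (x k) - f xs = K%:R^-1 * \sum_(k < K) (f (x k) - f xs).
  by rewrite sumrB sumr_const card_ord mulrBr -[f xs *+ K]mulr_natl mulrA mulVf ?gt_eqF // mul1r.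
by apply: mean_le_div_sqrt => //; rewrite mulr_ge0 ?enorm_ge0 ?ltW.
Qed.
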